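(* Let $M=(S,\mathrm{Act},P)$ be an MDP, $T\subseteq S$, $\mathrm{opt}\in\{\min,\max\}$, let $Z=\{s\in S\mid\Pr^{\mathrm{opt}}_s(\Diamond T)=0\}$, and let $r$ be the least fixed point of $\tilde D^{\mathrm{opt}}$. Then for all $s\in S$: $r(s)=0$ if and only if $s\in Z$.
   Context: An MDP is a tuple $M=(S,\mathrm{Act},P)$ with $S$ finite, $\mathrm{Act}$ finite, $P\colon S\times\mathrm{Act}\times S\to[0,1]$ with $\sum_{s'}P(s,a,s')\in\{0,1\}$; $\mathrm{Act}(s)=\{a\mid\sum_{s'}P(s,a,s')=1\}$ is nonempty for all $s$; $\mathrm{Post}(s,a)=\{s'\mid P(s,a,s')>0\}$. A strategy is $\sigma\colon S\to\mathrm{Act}$ with $\sigma(s)\in\mathrm{Act}(s)$, inducing a Markov chain with transitions $P(s,\sigma(s),\cdot)$; $\Pr^\sigma_s(\Diamond T)$ is the probability of visiting $T$ from $s$ and $\Pr^{\mathrm{opt}}_s(\Diamond T)=\mathrm{opt}_\sigma\Pr^\sigma_s(\Diamond T)$. $\mathbb{N}_\infty=\mathbb{N}\cup\{\infty\}$ with $\infty+1=\infty$. $\tilde D^{\mathrm{opt}}(r)(s)=\infty$ for $s\in T$ and $\mathrm{opt}_{a\in\mathrm{Act}(s)}\big(\min_{s'\in\mathrm{Post}(s,a)}r(s')+[\exists u,v\in\mathrm{Post}(s,a)\colon r(u)\ne r(v)]\big)$ for $s\notin T$ ($[\varphi]\in\{0,1\}$ the Iverson bracket); it is monotone w.r.t.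 the pointwise order, so its least fixed point exists. *)

From HB Require Import structures.
From mathcomp Require Import all_boot all_order all_algebra.
From mathcomp Require Import boolp classical_sets reals.
Set Implicit Arguments. Unset Strict Implicit. Unset Printing Implicit Defensive.
Import Order.TTheory GRing.Theory Num.Theory.
Local Open Scope ring_scope.
Local Open Scope classical_set_scope.

Section MDP.
Variables (R : realType) (S A : finType) (P : S -> A -> S -> R).

Definition is_MDP : Prop :=
  (forall s a s', 0 <= P s a s' <= 1) /\
  (forall s a, \sum_(s' : S) P s a s' = 0 \/ \sum_(s' : S) P s a s' = 1) /\
  (forall s, exists a, \sum_(s' : S) P s a s' = 1).

Definition enabled (s : S) (a : A) : bool := \sum_(s' : S) P s a s' == 1.
Definition post (s : S) (a : A) : pred S := fun s' => 0 < P s a s'.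

Definition strategy (sigma : S -> A) : Prop := forall s, enabled s (sigma s).

(* probability, in the Markov chain induced by sigma, of visiting T within
   n steps from s (sum of the probabilities of the cylinder sets). *)
Fixpoint reach_within (sigma : S -> A) (T : {set S}) (n : nat) (s : S) : R :=
  if s \in T then 1 else
  match n with
  | 0 => 0
  | n'.+1 => \sum_(s' : S) P s (sigma s) s' * reach_within sigma T n' s'
  end.

Definition Pr_reach (sigma : S -> A) (T : {set S}) (s : S) : R :=
  sup (range (fun n : nat => reach_within sigma T n s)).

Definition Pr_opt (maxopt : bool) (T : {set S}) (s : S) : R :=
  let E := (fun sigma : S -> A => Pr_reach sigma T s) @` [set sigma : S -> A | strategy sigma] in
  if maxopt then sup E else inf E.

(* N_infinity = nat + {infinity}; None stands for infinity *)
Definition ninf := option nat.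
Definition ninf_le (x y : ninf) : bool :=
  match x, y with
  | _, None => true
  | None, Some _ => false
  | Some m, Some n => (m <= n)%N
  end.
Definition ninf_min (x y : ninf) : ninf := if ninf_le x y then x else y.
Definition ninf_max (x y : ninf) : ninf := if ninf_le x y then y else x.
Definition ninf_add (x : ninf) (k : nat) : ninf :=
  match x with None => None | Some m => Some (m + k)%N end.

Definition Dtilde (maxopt : bool) (T : {set S}) (r : S -> ninf) (s : S) : ninf :=
  if s \in T then None else
  let val (a : A) : ninf :=
    ninf_add (\big[ninf_min/None]_(s' | post s a s') r s')
             (nat_of_bool [exists u, exists v,
                 [&& post s a u, post s a v & r u != r v]]) in
  if maxopt then \big[ninf_max/Some 0%N]_(a | enabled s a) val a
  else \big[ninf_min/None]_(a | enabled s a) val a.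

Definition is_lfp (F : (S -> ninf) -> (S -> ninf)) (r : S -> ninf) : Prop :=
  F r = r /\ (forall r', F r' = r' -> forall s, ninf_le (r s) (r' s)).

End MDP.

From HB Require Import structures.
From mathcomp Require Import all_boot all_order all_algebra.
From mathcomp Require Import boolp classical_sets reals.
Import Order.TTheory GRing.Theory Num.Theory.
Local Open Scope ring_scope.

(* A value 0 of an action forces all its successors to have value 0, so the
   zero set Z of a fixed point of D~ avoids T and is closed under every
   (max) or some (min) enabled action; a strategy confined to Z never reaches
   T.  Conversely, call the k-th attractor the states from which T is reached
   within k steps with positive probability under some (max) or every (min)
   strategy.  There the reachability probability is at least p^k, p the least
   positive transition probability, so Pr^opt_s = 0 puts s outside every
   attractor.  The function that is 0 outside all attractors and infinite
   elsewhere is a pre-fixed point of D~, hence lies above its least fixed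
   point. *)

Set Implicit Arguments.
Unset Strict Implicit.

Section NInfOrder.
Local Open Scope order_scope.

Fact ninf_display : Order.disp_t. Proof. exact: Order.Disp tt tt. Qed.

Lemma ninf_le_anti : antisymmetric ninf_le.
Proof. by case=> [m|] [n|] //= /andP[mn nm]; rewrite (@anti_leq m n) ?mn. Qed.

Lemma ninf_le_trans : transitive ninf_le.
Proof. by case=> [n|] [m|] [p|] //=; apply: leq_trans. Qed.

Lemma ninf_le_total : total ninf_le.
Proof. by case=> [m|] [n|] //=; apply: leq_total. Qed.

HB.instance Definition _ := Choice.on ninf.
HB.instance Definition _ := Order.isOrder.Build ninf_display ninf
  (fun _ _ => erefl) (fun _ _ => erefl) (fun _ _ => erefl)
  ninf_le_anti ninf_le_trans ninf_le_total.

Lemma ninf_minE : ninf_min = Order.min.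
Proof. by apply/funext => x; apply/funext => y; rewrite minEle. Qed.

Lemma ninf_maxE : ninf_max = Order.max.
Proof. by apply/funext => x; apply/funext => y; rewrite maxEle. Qed.

Lemma ninf_le_None (x : ninf) : x <= None.
Proof. by case: x. Qed.

Lemma ninf_le0 (x : ninf) : (x <= Some 0%N) = (x == Some 0%N).
Proof. by case: x => [[|n]|]. Qed.

Lemma ninf_add_eq0 (m : ninf) (b : bool) :
  (ninf_add m b == Some 0%N) = (m == Some 0%N) && ~~ b.
Proof. by case: m => [[|n]|]; case: b. Qed.

Lemma ninf_add_bool_le (m1 m2 : ninf) (b1 b2 : bool) :
  m1 <= m2 -> (m1 = m2 -> b1 -> b2) -> ninf_add m1 b1 <= ninf_add m2 b2.
Proof.
case: m2 => [n2|] //; case: m1 => [n1|] // le12 b12.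
change (n1 + b1 <= n2 + b2)%N.
move: le12; rewrite [_ <= _]leq_eqVlt => /orP[/eqP eq12 | lt12]; last first.
  by rewrite (leq_trans (leq_add (leqnn n1) (leq_b1 b1))) // addn1 ltn_addr.
by rewrite eq12 leq_add2l; case: b1 b2 b12 => [] [] // /(_ (congr1 Some eq12) isT).
Qed.

End NInfOrder.

Section LeastFixpoint.
Local Open Scope order_scope.
Variables (S : finType) (F : (S -> ninf) -> S -> ninf).
Hypothesis F_mono : forall r1 r2 : S -> ninf,
  (forall s, r1 s <= r2 s) -> forall s, F r1 s <= F r2 s.

Definition prefixpoint (q : S -> ninf) : Prop := forall s, F q s <= q s.

(* Knaster-Tarski: the pointwise infimum of all pre-fixed points is a fixed point. *)
Let prefix_value s (n : nat) : bool :=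
  `[< exists2 q, prefixpoint q & q s = Some n >].

Let prefix_glb s : ninf :=
  if pselect (exists n, prefix_value s n) is left ex_n then Some (ex_minn ex_n)
  else None.

Let prefix_glb_le q : prefixpoint q -> forall s, prefix_glb s <= q s.
Proof.
move=> pre_q s; rewrite /prefix_glb; case: pselect => [ex_n|no_n].
  case: ex_minnP => m _ min_m; case E: (q s) => [n|] //=.
  by apply: min_m; apply/asboolP; exists q.
case E: (q s) => [n|] //; case: no_n; exists n.
by apply/asboolP; exists q.
Qed.

Let le_prefix_glb x s :
  (forall q, prefixpoint q -> x <= q s) -> x <= prefix_glb s.
Proof.
move=> lb; rewrite /prefix_glb; case: pselect => [ex_n|_]; last exact: ninf_le_None.
by case: ex_minnP => m /asboolP[q pre_q <-] _; apply: lb.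
Qed.

Let prefix_glb_prefixpoint : prefixpoint prefix_glb.
Proof.
move=> s; apply: le_prefix_glb => q pre_q.
apply: le_trans (pre_q s); apply: F_mono; exact: prefix_glb_le.
Qed.

Let prefix_glb_fixpoint : F prefix_glb = prefix_glb.
Proof.
apply/funext => s; apply/le_anti; rewrite prefix_glb_prefixpoint /=.
apply: prefix_glb_le => s'; apply: F_mono; exact: prefix_glb_prefixpoint.
Qed.

Lemma lfp_le_prefixpoint r :
  is_lfp F r -> forall q, prefixpoint q -> forall s, r s <= q s.
Proof.
move=> [_ least] q pre_q s.
apply: le_trans (prefix_glb_le pre_q s); exact: least prefix_glb_fixpoint s.
Qed.

End LeastFixpoint.

Section Dtilde.
Local Open Scope order_scope.
Variables (R : realType) (S A : finType) (P : S -> A -> S -> R).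

Definition post_min (r : S -> ninf) s a : ninf :=
  \big[Order.min/None]_(s' | post P s a s') r s'.

Definition post_spread (r : S -> ninf) s a : bool :=
  [exists u, exists v, [&& post P s a u, post P s a v & r u != r v]].

Definition action_val (r : S -> ninf) s a : ninf :=
  ninf_add (post_min r s a) (post_spread r s a).

Lemma DtildeE mx T r s : Dtilde P mx T r s =
  if s \in T then None
  else if mx then \big[Order.max/Some 0%N]_(a | enabled P s a) action_val r s a
  else \big[Order.min/None]_(a | enabled P s a) action_val r s a.
Proof. by rewrite /Dtilde ninf_minE ninf_maxE. Qed.

Lemma post_min_le r s a x : post P s a x -> post_min r s a <= r x.
Proof. exact: bigmin_le_cond. Qed.

Lemma post_min_attained r s a x :
  post P s a x -> exists2 w, post P s a w & post_min r s a = r w.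
Proof.
move=> px; have [w pw Ew] := eq_bigmin x _ r px (fun y _ => ninf_le_None (r y)).
by exists w => //; exact: Ew.
Qed.

Lemma post_spreadE r s a :
  post_spread r s a = [exists x, post P s a x && (r x != post_min r s a)].
Proof.
apply/existsP/existsP => [[u /existsP[v /and3P[pu pv ruv]]] | [x /andP[px rx]]].
  have [Eu|] := eqVneq (r u) (post_min r s a); last by exists u; rewrite pu.
  by exists v; rewrite pv -Eu eq_sym.
have [w pw Ew] := post_min_attained r px.
by exists w; apply/existsP; exists x; rewrite pw px -Ew eq_sym.
Qed.

Section Monotone.
Variables (r1 r2 : S -> ninf).
Hypothesis le_r : forall x, r1 x <= r2 x.

Lemma post_min_mono s a : post_min r1 s a <= post_min r2 s a.
Proof. exact: le_bigmin2. Qed.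

(* A successor where r1 is off its minimum lies strictly above it, so r2 is off
   its (equal) minimum there too. *)
Lemma post_spread_mono s a :
  post_min r1 s a = post_min r2 s a -> post_spread r1 s a -> post_spread r2 s a.
Proof.
rewrite !post_spreadE => Emin /existsP[x /andP[px rx]].
apply/existsP; exists x; rewrite px /=; apply: contraNneq rx => r2x.
by apply/eqP/le_anti; rewrite post_min_le // andbT Emin -r2x le_r.
Qed.

Lemma action_val_mono s a : action_val r1 s a <= action_val r2 s a.
Proof.
by apply: ninf_add_bool_le; [exact: post_min_mono | exact: post_spread_mono].
Qed.

End Monotone.

Lemma Dtilde_mono mx T r1 r2 : (forall s, r1 s <= r2 s) ->
  forall s, Dtilde P mx T r1 s <= Dtilde P mx T r2 s.
Proof.
move=> le_r s; rewrite !DtildeE; case: (s \in T) => //; case: mx.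
  by apply: le_bigmax2 => a _; exact: action_val_mono.
by apply: le_bigmin2 => a _; exact: action_val_mono.
Qed.

Lemma action_val_eq0 r s a : (exists x, post P s a x) ->
  action_val r s a = Some 0%N <-> forall x, post P s a x -> r x = Some 0%N.
Proof.
move=> [x0 px0]; rewrite /action_val; split.
  move/eqP; rewrite ninf_add_eq0 post_spreadE.
  move=> /andP[/eqP min0 /existsPn spread0] x px.
  by apply/eqP; move: (spread0 x); rewrite px min0 negbK.
move=> all0; have min0 : post_min r s a = Some 0%N.
  by apply/eqP; rewrite -ninf_le0 -(all0 x0 px0) post_min_le.
apply/eqP; rewrite ninf_add_eq0 post_spreadE min0 eqxx; apply/existsPn => x.
by rewrite negb_and negbK -implybE; apply/implyP => /all0 ->.
Qed.

Lemma Dtilde_max_eq0 T r s : Dtilde P true T r s = Some 0%N <->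
  s \notin T /\ forall a, enabled P s a -> action_val r s a = Some 0%N.
Proof.
rewrite DtildeE; case: ifP => //= sT; first by split=> // -[].
split=> [val0 | [_ all0]].
  by split=> // a Ea; apply/eqP; rewrite -ninf_le0 -val0 le_bigmax_cond.
by apply/eqP; rewrite -ninf_le0; apply: bigmax_le => // a Ea; rewrite all0.
Qed.

Lemma Dtilde_min_eq0 T r s : Dtilde P false T r s = Some 0%N <->
  s \notin T /\ exists2 a, enabled P s a & action_val r s a = Some 0%N.
Proof.
rewrite DtildeE; case: ifP => //= sT; first by split=> // -[].
split=> [val0 | [_ [a Ea val0]]]; last first.
  by apply/eqP; rewrite -ninf_le0 -val0 bigmin_le_cond.
split=> //; have [a Ea|none] := pickP (enabled P s).
  have [b Eb Emin] := eq_bigmin a _ (action_val r s) Ea (fun b _ => ninf_le_None _).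
  by exists b; rewrite // -Emin.
by move: val0; rewrite big_pred0.
Qed.

End Dtilde.

Section Attractor.
Variables (R : realType) (S A : finType) (P : S -> A -> S -> R) (T : {set S}).

Definition reaches_in s a (X : pred S) : bool := [exists x, post P s a x && X x].

Lemma reaches_in_sub s a (X Y : pred S) :
  (forall x, X x -> Y x) -> reaches_in s a X -> reaches_in s a Y.
Proof.
move=> XY /existsP[x /andP[px Xx]]; apply/existsP; exists x.
by rewrite px XY.
Qed.

(* [attractor true k]: T is reached within k steps with positive probability
   under some strategy; [attractor false k]: under every strategy. *)
Fixpoint attractor (mx : bool) (k : nat) (s : S) : bool :=
  (s \in T) ||
  if k is j.+1 then
    if mx then [exists a, enabled P s a && reaches_in s a (attractor mx j)]
    else [forall a, enabled P s a ==> reaches_in s a (attractor mx j)]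
  else false.

Lemma attractor0 mx s : attractor mx 0 s = (s \in T).
Proof. by rewrite /= orbF. Qed.

Lemma attractorS mx k s : attractor mx k s -> attractor mx k.+1 s.
Proof.
elim: k s => [|k IH] s; first by rewrite attractor0 /= => ->.
rewrite [attractor _ k.+1 s]/= [attractor _ k.+2 s]/=; case: (s \in T) => //=.
have sub_k a : reaches_in s a (attractor mx k) -> reaches_in s a (attractor mx k.+1).
  exact: reaches_in_sub.
case: mx IH sub_k => IH sub_k.
  by case/existsP => a /andP[Ea reach_a]; apply/existsP; exists a; rewrite Ea sub_k.
move/forallP => all_a; apply/forallP => a; apply/implyP => Ea.
by apply: sub_k; move/implyP: (all_a a); apply.
Qed.

Lemma attractor_mono mx k j s : (k <= j)%N -> attractor mx k s -> attractor mx j s.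
Proof. by move/subnK <-; elim: (j - k)%N => // n IH /IH /attractorS. Qed.

Lemma attractor_max_descent s : s \notin T -> (exists j, attractor true j.+1 s) ->
  exists2 a, enabled P s a &
    forall j, attractor true j.+1 s -> reaches_in s a (attractor true j).
Proof.
move=> sT [j0 attr_j0]; have : exists m, attractor true m s by exists j0.+1.
case/ex_minnP => [[|m]] attr_m min_m; first by rewrite attractor0 (negbTE sT) in attr_m.
rewrite /= (negbTE sT) in attr_m; case/existsP: attr_m => a /andP[Ea reach_a].
exists a => // j attr_j; apply: reaches_in_sub reach_a => x.
by apply: attractor_mono; rewrite -ltnS; exact: min_m attr_j.
Qed.

Definition avoids mx s : Prop := forall k, ~~ attractor mx k s.

Definition avoid_indicator mx s : ninf :=
  if `[< avoids mx s >] then Some 0%N else None.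

Lemma avoids_notin mx s : avoids mx s -> s \notin T.
Proof. by move/(_ 0%N); rewrite attractor0. Qed.

Lemma avoids_max_succ s a x :
  avoids true s -> enabled P s a -> post P s a x -> avoids true x.
Proof.
move=> avoid_s Ea px k; apply: contra (avoid_s k.+1) => attr_x.
apply/orP; right; apply/existsP; exists a; rewrite Ea.
by apply/existsP; exists x; rewrite px.
Qed.

Lemma avoids_min_succ s : avoids false s ->
  exists2 a, enabled P s a & forall x, post P s a x -> avoids false x.
Proof.
move=> avoid_s; apply: contrapT => no_a.
have [k reach_k] : exists k : A -> nat,
    forall a, enabled P s a -> reaches_in s a (attractor false (k a)).
  apply: (@fin_all_exists _ (fun=> nat)
    (fun a n => enabled P s a -> reaches_in s a (attractor false n))) => a.
  apply: contrapT => no_k; apply: no_a.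
  exists a => [|x px j]; first by apply: contrapT => nEa; apply: no_k; exists 0%N.
  apply/negP => attr_x; apply: no_k; exists j => _.
  by apply/existsP; exists x; rewrite px.
case/negP: (avoid_s (\max_a k a).+1); rewrite /= (negbTE (avoids_notin avoid_s)).
apply/forallP => a; apply/implyP => Ea; apply: reaches_in_sub (reach_k a Ea) => x.
by apply: attractor_mono; exact: leq_bigmax.
Qed.

End Attractor.

Section MDP.
Variables (R : realType) (S A : finType) (P : S -> A -> S -> R).
Hypothesis P_MDP : is_MDP P.

Lemma P_ge0 s a x : 0 <= P s a x.
Proof. by case: P_MDP => bounds _; case/andP: (bounds s a x). Qed.

Lemma P_eq0_notpost s a x : ~~ post P s a x -> P s a x = 0.
Proof. by rewrite /post -leNgt => P_le0; apply/eqP; rewrite eq_le P_le0 P_ge0. Qed.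

Lemma post_nonempty s a : enabled P s a -> exists x, post P s a x.
Proof.
move=> /eqP sum1; have [x px|no_post] := pickP (post P s a); first by exists x.
move: sum1; rewrite big1 => [/eqP|x _]; first by rewrite eq_sym oner_eq0.
exact/P_eq0_notpost/negbT/no_post.
Qed.

Lemma exists_strategy_with (Z : S -> Prop) (good : S -> A -> Prop) :
  (forall s, Z s -> exists2 a, enabled P s a & good s a) ->
  exists2 sigma, strategy P sigma & forall s, Z s -> good s (sigma s).
Proof.
move=> Z_good.
have [sigma sigmaP] : exists sigma : S -> A,
    forall s, enabled P s (sigma s) /\ (Z s -> good s (sigma s)).
  apply: (@fin_all_exists _ (fun=> A)
    (fun s a => enabled P s a /\ (Z s -> good s a))) => s.
  have [Zs|nZs] := pselect (Z s).
    by have [a Ea ga] := Z_good s Zs; exists a.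
  by have [_ [_ /(_ s)[a sum1]]] := P_MDP; exists a; split=> //; apply/eqP.
by exists sigma => s; have [] := sigmaP s.
Qed.

Lemma exists_strategy : exists sigma, strategy P sigma.
Proof.
have [sigma strat _] :=
  @exists_strategy_with (fun=> False) (fun _ _ => True) (fun _ => False_ind _).
by exists sigma.
Qed.

Section Reach.
Variables (sigma : S -> A) (T : {set S}).

Lemma reach_within_ge0 n s : 0 <= reach_within P sigma T n s.
Proof.
elim: n s => [|n IH] s /=; case: (s \in T) => //.
by apply: sumr_ge0 => x _; rewrite mulr_ge0 ?P_ge0.
Qed.

Lemma reach_within_le1 n s : strategy P sigma -> reach_within P sigma T n s <= 1.
Proof.
move=> strat; elim: n s => [|n IH] s /=; case: (s \in T) => //.
rewrite -(eqP (strat s)); apply: ler_sum => x _.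
by rewrite -[leRHS]mulr1 ler_wpM2l ?P_ge0.
Qed.

Lemma reach_within_step_ge n s x : s \notin T ->
  P s (sigma s) x * reach_within P sigma T n x <= reach_within P sigma T n.+1 s.
Proof.
move=> sT; rewrite /= (negbTE sT) (bigD1 x) //= lerDl.
by apply: sumr_ge0 => y _; rewrite mulr_ge0 ?P_ge0 ?reach_within_ge0.
Qed.

Lemma reach_within_closed_eq0 (Z : pred S) :
  (forall s, Z s -> s \notin T /\ forall x, post P s (sigma s) x -> Z x) ->
  forall n s, Z s -> reach_within P sigma T n s = 0.
Proof.
move=> Z_closed; elim=> [|n IH] s Zs /=.
  by have [/negbTE -> _] := Z_closed s Zs.
have [/negbTE -> Z_succ] := Z_closed s Zs.
apply: big1 => x _; have [px|npx] := boolP (post P s (sigma s) x).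
  by rewrite IH ?mulr0 ?Z_succ.
by rewrite P_eq0_notpost ?mul0r.
Qed.

Lemma reach_within_le_Pr n s : strategy P sigma ->
  reach_within P sigma T n s <= Pr_reach P sigma T s.
Proof.
move=> strat; apply: ub_le_sup; last by exists n.
by exists 1 => _ [m _ <-]; exact: reach_within_le1.
Qed.

Lemma Pr_reach_ge0 s : strategy P sigma -> 0 <= Pr_reach P sigma T s.
Proof.
by move=> strat; apply: le_trans (reach_within_le_Pr 0 s strat); exact: reach_within_ge0.
Qed.

Lemma Pr_reach_le1 s : strategy P sigma -> Pr_reach P sigma T s <= 1.
Proof.
move=> strat; apply: ge_sup; first by exists (reach_within P sigma T 0 s), 0%N.
by move=> _ [n _ <-]; exact: reach_within_le1.
Qed.

Lemma Pr_reach_eq0 s : (forall n, reach_within P sigma T n s = 0) ->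
  Pr_reach P sigma T s = 0.
Proof.
move=> all0; rewrite /Pr_reach -[RHS](sup1 (0 : R)); congr sup.
by apply/seteqP; split => [_ [n _ <-] | _ ->] /=; [rewrite all0 | exists 0%N].
Qed.

End Reach.

Local Open Scope classical_set_scope.

Let strategy_values T s :=
  (fun sigma => Pr_reach P sigma T s) @` [set sigma | strategy P sigma].

Lemma Pr_opt_max_eq0 T s :
  (forall sigma, strategy P sigma -> Pr_reach P sigma T s = 0) ->
  Pr_opt P true T s = 0.
Proof.
move=> all0; rewrite /Pr_opt -/(strategy_values T s) -[RHS](sup1 (0 : R)).
congr sup; apply/seteqP; split => [_ [sigma strat <-] | _ ->] /=; first exact: all0.
by have [sigma strat] := exists_strategy; exists sigma => //; exact: all0.
Qed.

Lemma Pr_opt_min_eq0 T s sigma : strategy P sigma ->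
  Pr_reach P sigma T s = 0 -> Pr_opt P false T s = 0.
Proof.
move=> strat Pr0; rewrite /Pr_opt -/(strategy_values T s).
have lb0 : lbound (strategy_values T s) 0.
  by move=> _ [tau tau_strat <-]; exact: Pr_reach_ge0.
apply/le_anti; rewrite lb_le_inf ?andbT //; last by exists 0, sigma.
by rewrite -Pr0; apply: ge_inf; [exists 0 | exists sigma].
Qed.

Lemma Pr_opt_max_ge T s sigma c : strategy P sigma ->
  c <= Pr_reach P sigma T s -> c <= Pr_opt P true T s.
Proof.
move=> strat c_le; apply: le_trans c_le _; apply: ub_le_sup; last by exists sigma.
by exists 1 => _ [tau tau_strat <-]; exact: Pr_reach_le1.
Qed.

Lemma Pr_opt_min_ge T s c :
  (forall sigma, strategy P sigma -> c <= Pr_reach P sigma T s) ->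
  c <= Pr_opt P false T s.
Proof.
move=> all_ge; apply: lb_le_inf => [|_ [sigma strat <-]]; last exact: all_ge.
by have [sigma strat] := exists_strategy; exists (Pr_reach P sigma T s), sigma.
Qed.

Definition min_prob : R :=
  \big[Order.min/1]_(t : S * A * S | post P t.1.1 t.1.2 t.2) P t.1.1 t.1.2 t.2.

Lemma min_prob_gt0 : 0 < min_prob.
Proof. by apply/bigmin_gtP; split=> // t. Qed.

Lemma min_prob_le1 : min_prob <= 1.
Proof. exact: bigmin_le_id. Qed.

Lemma min_prob_le s a x : post P s a x -> min_prob <= P s a x.
Proof. exact: (@bigmin_le_cond _ _ _ _ (s, a, x)). Qed.

Lemma reach_within_ge_pow sigma (T : {set S}) (L : nat -> pred S) :
  (forall s, L 0%N s -> s \in T) ->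
  (forall j s, s \notin T -> L j.+1 s -> reaches_in P s (sigma s) (L j)) ->
  forall k s, L k s -> min_prob ^+ k <= reach_within P sigma T k s.
Proof.
move=> L0 step; elim=> [|k IH] s Lks; first by rewrite /= L0 ?expr0.
have [sT|sT] := boolP (s \in T).
  by rewrite /= sT exprn_ile1 ?min_prob_le1 // ltW ?min_prob_gt0.
have /existsP[x /andP[px Lkx]] := step k s sT Lks.
apply: le_trans (reach_within_step_ge sigma k x sT).
have min_prob_ge0 := ltW min_prob_gt0.
by rewrite exprS ler_pM ?exprn_ge0 ?min_prob_le ?IH.
Qed.

Lemma Pr_opt_gt0_of_attractor mx T k s :
  attractor P T mx k s -> 0 < Pr_opt P mx T s.
Proof.
move=> attr_s; have pow_gt0 := exprn_gt0 k min_prob_gt0.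
have attr0 x : attractor P T mx 0 x -> x \in T by rewrite attractor0.
case: mx attr_s attr0 => attr_s attr0.
  pose descends x a :=
    forall j, attractor P T true j.+1 x -> reaches_in P x a (attractor P T true j).
  have [sigma strat step] : exists2 sigma, strategy P sigma &
      forall x, x \notin T /\ (exists j, attractor P T true j.+1 x) ->
        descends x (sigma x).
    apply: (exists_strategy_with (good := descends)) => x [xT ex_j].
    exact: attractor_max_descent.
  apply: lt_le_trans pow_gt0 (Pr_opt_max_ge strat _).
  apply: le_trans (reach_within_le_Pr T k s strat).
  apply: reach_within_ge_pow attr0 _ k s attr_s => j x xT attr_j.
  exact: step (conj xT (ex_intro _ j attr_j)) j attr_j.
apply: lt_le_trans pow_gt0 (Pr_opt_min_ge _) => sigma strat.
apply: le_trans (reach_within_le_Pr T k s strat).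
apply: reach_within_ge_pow attr0 _ k s attr_s => j x xT.
by rewrite /= (negbTE xT) => /forallP/(_ (sigma x))/implyP; apply.
Qed.

Lemma Pr_opt_eq0_of_fixpoint mx T r s :
  Dtilde P mx T r = r -> r s = Some 0%N -> Pr_opt P mx T s = 0.
Proof.
move=> fix_r rs0.
pose zero_closed x a := forall y, post P x a y -> r y = Some 0%N.
have zero_Pr sigma :
    (forall x, r x = Some 0%N -> x \notin T /\ zero_closed x (sigma x)) ->
    Pr_reach P sigma T s = 0.
  move=> closed; apply: Pr_reach_eq0 => n.
  apply: (reach_within_closed_eq0 (Z := fun x => r x == Some 0%N)); last exact/eqP.
  by move=> x /eqP/closed[xT x_closed]; split=> // y py; rewrite x_closed.
have val0_closed x a :
    enabled P x a -> action_val P r x a = Some 0%N -> zero_closed x a.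
  by move=> /post_nonempty ne /(action_val_eq0 r ne).
have Dtilde0 x : r x = Some 0%N -> Dtilde P mx T r x = Some 0%N by rewrite fix_r.
case: mx fix_r Dtilde0 => _ Dtilde0.
  apply: Pr_opt_max_eq0 => sigma strat; apply: zero_Pr => x /Dtilde0.
  move=> /Dtilde_max_eq0[xT all0]; split=> //.
  exact: val0_closed (strat x) (all0 _ (strat x)).
have [sigma strat closed] : exists2 sigma, strategy P sigma &
    forall x, r x = Some 0%N -> x \notin T /\ zero_closed x (sigma x).
  apply: (exists_strategy_with (good := fun x a => x \notin T /\ zero_closed x a)).
  move=> x /Dtilde0 /Dtilde_min_eq0[xT [a Ea val0]].
  by exists a => //; split; last exact: val0_closed val0.
exact: Pr_opt_min_eq0 strat (zero_Pr sigma closed).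
Qed.

Lemma avoid_indicator_prefixpoint mx T :
  prefixpoint (Dtilde P mx T) (avoid_indicator P T mx).
Proof.
move=> s; rewrite {2}/avoid_indicator.
case: asboolP => [avoid_s|_]; last exact: ninf_le_None.
rewrite ninf_le0; apply/eqP; have sT := avoids_notin avoid_s.
have ind0 x : avoids P T mx x -> avoid_indicator P T mx x = Some 0%N.
  by move=> avoid_x; rewrite /avoid_indicator asboolT.
case: mx avoid_s ind0 => avoid_s ind0.
  apply/Dtilde_max_eq0; split=> // a Ea.
  apply/(action_val_eq0 _ (post_nonempty Ea)) => x px.
  exact/ind0/(avoids_max_succ avoid_s Ea px).
have [a Ea succ] := avoids_min_succ avoid_s.
apply/Dtilde_min_eq0; split=> //; exists a => //.
by apply/(action_val_eq0 _ (post_nonempty Ea)) => x /succ /ind0.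
Qed.

End MDP.

Unset Implicit Arguments.
Set Strict Implicit.

Theorem lemma9 (R : realType) (S A : finType) (P : S -> A -> S -> R)
  (T : {set S}) (maxopt : bool) (r : S -> ninf) :
  is_MDP P ->
  is_lfp (Dtilde P maxopt T) r ->
  forall s : S, r s = Some 0%N <-> Pr_opt P maxopt T s = 0.
Proof.
move=> P_MDP lfp_r s; split=> [rs0 | Pr0].
  by apply: Pr_opt_eq0_of_fixpoint rs0 => //; case: lfp_r.
have avoid_s : avoids P T maxopt s.
  by move=> k; apply/negP => /(Pr_opt_gt0_of_attractor P_MDP); rewrite Pr0 ltxx.
apply/eqP; rewrite -ninf_le0.
have := lfp_le_prefixpoint (Dtilde_mono P maxopt T) lfp_r
  (avoid_indicator_prefixpoint P_MDP maxopt T) s.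
by rewrite /avoid_indicator asboolT.
Qed.
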